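(* Let $G(t)=\sum_{k=0}^\infty a_k\frac{t^{k+1}}{k+1}$ be a strictly increasing real analytic function with $a_0=1$, whose coefficients do not depend on $\alpha$, and such that $\ln_G(x):=G(\ln x)$ is continuous, strictly increasing and strictly concave on $(0,\infty)$. For $\alpha>1$ and probability distributions $p=(p_1,\dots,p_W)$ define $Z_{G,\alpha}(p):=\frac{\ln_G(\sum_{i=1}^W p_i^{\alpha})}{1-\alpha}$. Then $Z_{G,\alpha}$ is Schur concave: whenever $p$ and $r$ are probability distributions on $W$ points with $p\preceq r$, one has $Z_{G,\alpha}(p)\ge Z_{G,\alpha}(r)$.
   Context: Majorization: for $\mathbf a,\mathbf b\in\mathbb{R}^n$ with entries sorted in decreasing order $a_1\ge\dots\ge a_n$, $b_1\ge\dots\ge b_n$, one writes $\mathbf b\preceq\mathbf a$ (a majorizes b) if $\sum_{i=1}^k a_i\ge\sum_{i=1}^k b_i$ for $k=1,\dots,n-1$ and $\sum_{i=1}^n a_i=\sum_{i=1}^n b_i$. *)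

From HB Require Import structures.
From mathcomp Require Import all_boot all_order all_algebra.
From mathcomp Require Import all_classical all_reals all_analysis.
Set Implicit Arguments. Unset Strict Implicit. Unset Printing Implicit Defensive.
Import Order.TTheory GRing.Theory Num.Theory.
Import numFieldNormedType.Exports.
Local Open Scope ring_scope.
Local Open Scope classical_set_scope.

Definition real_analytic (R : realType) (f : R -> R) : Prop :=
  forall x0 : R, exists c : nat -> R, exists r : R, 0 < r /\
    forall x : R, `|x - x0| < r ->
      series (fun k => c k * (x - x0) ^+ k) @ \oo --> f x.

Definition lnG (R : realType) (G : R -> R) (x : R) : R := G (ln x).

Definition prob_dist (R : realType) (W : nat) (p : 'I_W -> R) : Prop :=
  (forall i, 0 <= p i) /\ \sum_(i < W) p i = 1.

Definition vec_seq (R : realType) (W : nat) (p : 'I_W -> R) : seq R :=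
  [seq p i | i : 'I_W].
Definition sort_dec (R : realType) (s : seq R) : seq R := sort (>=%R) s.

(* majorized b a  <->  b ≼ a  (a majorizes b), for vectors of length n *)
Definition majorized (R : realType) (n : nat) (b a : 'I_n -> R) : Prop :=
  let a' := sort_dec (vec_seq a) in
  let b' := sort_dec (vec_seq b) in
  (forall k : nat, (1 <= k <= n - 1)%N ->
     \sum_(i < k) b'`_i <= \sum_(i < k) a'`_i) /\
  \sum_(i < n) a'`_i = \sum_(i < n) b'`_i.

Definition Z_G (R : realType) (G : R -> R) (alpha : R) (W : nat)
  (p : 'I_W -> R) : R :=
  lnG G (\sum_(i < W) powR (p i) alpha) / (1 - alpha).

From HB Require Import structures.
From mathcomp Require Import all_boot all_order all_algebra.
From mathcomp Require Import all_classical all_reals all_analysis.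
From mathcomp Require Import ring lra.
Set Implicit Arguments. Unset Strict Implicit. Unset Printing Implicit Defensive.
Import Order.TTheory GRing.Theory Num.Theory.
Import numFieldNormedType.Exports.
Local Open Scope ring_scope.
Local Open Scope classical_set_scope.

(* Karamata's inequality for the convex function x |-> x^alpha gives
   sum_i p_i^alpha <= sum_i r_i^alpha whenever p is majorized by r.  Since
   1 - alpha < 0, Schur concavity of Z_{G,alpha} then only uses that ln_G is
   increasing. *)

Lemma powR_tangent_le (R : realType) (al x y : R) : 1 < al -> 0 <= x -> 0 <= y ->
  powR y al + al * powR y (al - 1) * (x - y) <= powR x al.
Proof.
move=> al_gt1 x_ge0 y_ge0.
have al_gt0 : 0 < al by apply: lt_trans al_gt1.
have al1_gt0 : 0 < al - 1 by rewrite subr_gt0.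
set q := al / (al - 1).
have q_gt0 : 0 < q by rewrite divr_gt0.
have conj_al_q : al^-1 + q^-1 = 1 by rewrite /q invf_div; field; rewrite gt_eqF.
have young := conjugate_powR x_ge0 (powR_ge0 y (al - 1)) al_gt0 q_gt0 conj_al_q.
have powRq : powR (powR y (al - 1)) q = powR y al.
  by rewrite -powRrM /q mulrCA divff ?gt_eqF // mulr1.
rewrite powRq in young.
have powRy : powR y (al - 1) * y = powR y al by rewrite mulrC mulr_powRB1.
rewrite -powRy in young *; set u := powR y (al - 1) in young *.
have scaled : al * (x * u) <= powR x al + (al - 1) * (u * y).
  apply: le_trans (ler_wpM2l (ltW al_gt0) young) _.
  by rewrite mulrDr /q le_eqVlt; apply/orP; left; apply/eqP; field; rewrite ?gt_eqF.
nra.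
Qed.

Lemma sum_mul_abel (R : comPzRingType) (d x : nat -> R) n :
  \sum_(i < n.+1) d i * x i = d n * \sum_(i < n.+1) x i
     + \sum_(i < n) (d i - d i.+1) * \sum_(j < i.+1) x j.
Proof.
elim: n => [|n IH]; first by rewrite !big_ord1 big_ord0 addr0.
rewrite big_ord_recr /= IH [\sum_(i < n.+2) x i]big_ord_recr /=.
rewrite [\sum_(i < n.+1) (d i - d i.+1) * _]big_ord_recr /=.
ring.
Qed.

Section Karamata.
Variables (R : realType) (f d : R -> R).
Hypothesis f_supported : forall x y, 0 <= x -> 0 <= y -> f y + d y * (x - y) <= f x.
Hypothesis d_nondecreasing : forall x y, 0 <= x -> x <= y -> d x <= d y.

(* The slopes d b_i are nonincreasing in i, so Abel summation turns the
   partial-sum inequalities into the sum inequality. *)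
Lemma karamata_sorted n (a b : seq R) :
  size b = n.+1 -> sorted >=%R b ->
  (forall i, 0 <= a`_i) -> (forall i, 0 <= b`_i) ->
  (forall k, (1 <= k <= n)%N -> \sum_(i < k) b`_i <= \sum_(i < k) a`_i) ->
  \sum_(i < n.+1) a`_i = \sum_(i < n.+1) b`_i ->
  \sum_(i < n.+1) f b`_i <= \sum_(i < n.+1) f a`_i.
Proof.
move=> size_b sorted_b a_ge0 b_ge0 partial_le total_eq.
rewrite -subr_ge0 -sumrB.
apply: le_trans (_ : 0 <= \sum_(i < n.+1) d b`_i * (a`_i - b`_i)) _; last first.
  by apply: ler_sum => i _; rewrite lerBrDl f_supported.
rewrite (sum_mul_abel (fun i => d b`_i) (fun i => a`_i - b`_i)) sumrB total_eq subrr mulr0 add0r.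
apply: sumr_ge0 => i _; apply: mulr_ge0.
  have ge_trans : {in predT & &, transitive (>=%R : rel R)}.
    by move=> y x z _ _ _ xy yz; apply: le_trans yz xy.
  have b_next_le : b`_i.+1 <= b`_i.
    apply: (sorted_ltn_nth_in ge_trans 0 (all_predT _) sorted_b) => //;
      by rewrite inE size_b ltnS ?(ltnW (ltn_ord i)).
  by rewrite subr_ge0 d_nondecreasing.
by rewrite sumrB subr_ge0; apply: partial_le; rewrite ltn_ord.
Qed.

End Karamata.

Lemma sum_sort_dec (R : realType) (f : R -> R) W (p : 'I_W -> R) :
  \sum_(i < W) f (p i) = \sum_(i < W) f (sort_dec (vec_seq p))`_i.
Proof.
have -> : \sum_(i < W) f (p i) = \sum_(x <- vec_seq p) f x.
  by rewrite /vec_seq big_map big_enum.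
rewrite /sort_dec -(perm_big _ (permEl (perm_sort >=%R (vec_seq p)))).
by rewrite (big_nth 0) big_mkord size_sort size_map size_enum_ord.
Qed.

Lemma size_sort_dec (R : realType) W (p : 'I_W -> R) :
  size (sort_dec (vec_seq p)) = W.
Proof. by rewrite size_sort size_map size_enum_ord. Qed.

Lemma sorted_sort_dec (R : realType) W (p : 'I_W -> R) :
  sorted >=%R (sort_dec (vec_seq p)).
Proof. by apply: sort_sorted => x y; rewrite /= le_total. Qed.

Lemma sort_dec_ge0 (R : realType) W (p : 'I_W -> R) : (forall i, 0 <= p i) ->
  forall k, 0 <= (sort_dec (vec_seq p))`_k.
Proof.
move=> p_ge0 k; case: (ltnP k (size (sort_dec (vec_seq p)))) => [k_lt|k_ge].
  by have := mem_nth 0 k_lt; rewrite mem_sort => /mapP[j _ ->].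
by rewrite nth_default.
Qed.

Lemma majorized_sum_powR_le (R : realType) (al : R) W (p r : 'I_W -> R) :
  1 < al -> (forall i, 0 <= p i) -> (forall i, 0 <= r i) -> majorized p r ->
  \sum_(i < W) powR (p i) al <= \sum_(i < W) powR (r i) al.
Proof.
move=> al_gt1 p_ge0 r_ge0 [partial_le total_eq].
case: W p r p_ge0 r_ge0 partial_le total_eq => [|n] p r p_ge0 r_ge0 partial_le total_eq.
  by rewrite !big_ord0.
have slope_nondecreasing x y : 0 <= x -> x <= y ->
    al * powR x (al - 1) <= al * powR y (al - 1).
  move=> x_ge0 xy; rewrite ler_wpM2l ?(ltW (lt_trans ltr01 al_gt1)) //.
  by rewrite ge0_ler_powR ?nnegrE ?subr_ge0 ?(ltW al_gt1) ?(le_trans x_ge0).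
rewrite (sum_sort_dec (fun x : R => powR x al) p) (sum_sort_dec (fun x : R => powR x al) r).
apply: (karamata_sorted (fun x y => powR_tangent_le al_gt1) slope_nondecreasing).
- exact: size_sort_dec.
- exact: sorted_sort_dec.
- exact: sort_dec_ge0.
- exact: sort_dec_ge0.
- by move=> k k_range; rewrite partial_le // subn1.
- exact: total_eq.
Qed.

Lemma prob_dist_sum_powR_gt0 (R : realType) (al : R) W (p : 'I_W -> R) :
  0 < al -> prob_dist p -> 0 < \sum_(i < W) powR (p i) al.
Proof.
move=> al_gt0 [_ p_sum1]; rewrite lt_neqAle sumr_ge0 ?andbT; last first.
  by move=> i _; exact: powR_ge0.
apply/negP => /eqP /esym /(psumr_eq0P (fun i _ => powR_ge0 (p i) al)) powR_eq0.
move: p_sum1; rewrite big1 => [/eqP|i _]; first by rewrite eq_sym oner_eq0.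
exact: powR_eq0_eq0 (powR_eq0 i isT).
Qed.

Theorem mainTheorem7 (R : realType) (G : R -> R) (a : nat -> R) :
  (* G(t) = sum_k a_k t^(k+1)/(k+1) (power series around 0) *)
  (exists r : R, 0 < r /\ forall t : R, `|t| < r ->
     series (fun k => a k * t ^+ k.+1 / k.+1%:R) @ \oo --> G t) ->
  real_analytic G ->
  a 0%N = 1 ->
  (* G strictly increasing *)
  (forall s t : R, s < t -> G s < G t) ->
  (* ln_G continuous, strictly increasing, strictly concave on (0,oo) *)
  (forall x : R, 0 < x -> {for x, continuous (lnG G)}) ->
  (forall x y : R, 0 < x -> x < y -> lnG G x < lnG G y) ->
  (forall x y l : R, 0 < x -> 0 < y -> x != y -> 0 < l < 1 ->
     l * lnG G x + (1 - l) * lnG G y < lnG G (l * x + (1 - l) * y)) ->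
  forall alpha : R, 1 < alpha ->
  forall (W : nat) (p r : 'I_W -> R),
    prob_dist p -> prob_dist r -> majorized p r ->
    Z_G G alpha r <= Z_G G alpha p.
Proof.
move=> _ _ _ _ _ lnG_incr _ al al_gt1 W p r p_dist r_dist p_maj_r.
have sum_le := majorized_sum_powR_le al_gt1 p_dist.1 r_dist.1 p_maj_r.
have sum_gt0 := prob_dist_sum_powR_gt0 (lt_trans ltr01 al_gt1) p_dist.
have lnG_le : lnG G (\sum_(i < W) powR (p i) al)
              <= lnG G (\sum_(i < W) powR (r i) al).
  by move: sum_le; rewrite le_eqVlt => /orP[/eqP -> //|/(lnG_incr _ _ sum_gt0)/ltW].
by rewrite /Z_G ler_wnM2r // invr_le0 subr_le0 ltW.
Qed.
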